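(* Let $p$ be a prime and let $G$ be a finite irreducible subgroup of $\mathrm{M}(p,\mathbb{C})$. Then $\mathrm{D}(p,\mathbb{C})\cap G$ is a maximal abelian normal subgroup of $G$.
   Context: $\mathrm{M}(p,\mathbb{C})$ is the group of monomial matrices in $\mathrm{GL}(p,\mathbb{C})$ and $\mathrm{D}(p,\mathbb{C})$ is the group of invertible diagonal matrices. *)

From HB Require Import structures.
From mathcomp Require Import all_boot all_order all_algebra all_fingroup.
From mathcomp Require Import mxrepresentation.
From mathcomp Require Import reals.
From mathcomp Require Import complex.
Set Implicit Arguments. Unset Strict Implicit. Unset Printing Implicit Defensive.
Import GRing.Theory Num.Theory.
Local Open Scope ring_scope.

(* A monomial matrix: exactly one nonzero entry in each row and in each column
   (such a matrix is automatically invertible). *)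
Definition is_monomial_mx (F : fieldType) (n : nat) (A : 'M[F]_n) : bool :=
  [forall i, #|[pred j | A i j != 0]| == 1%N] &&
  [forall j, #|[pred i | A i j != 0]| == 1%N].

(* Elements of G whose image is a diagonal matrix, i.e. (the preimage of)
   D(n, F) \cap rG(G). *)
Definition diag_part (F : fieldType) (gT : finGroupType) (G : {group gT}) (n : nat)
  (rG : mx_representation F G n) : {set gT} :=
  [set g in G | is_diag_mx (rG g)].

From HB Require Import structures.
From mathcomp Require Import all_boot all_order all_algebra all_fingroup.
From mathcomp Require Import mxrepresentation.
From mathcomp Require Import reals.
From mathcomp Require Import complex.

(* D := diag_part rG is the kernel of the homomorphism sending g to the
   permutation pattern of the monomial matrix rG g; so D is normal, abelian
   when rG is faithful, and irreducibility makes the image P of G transitive.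
   Let K be abelian and normal with D <= K.  Grouping indices by the
   character of D they carry gives a P-invariant partition, which for p
   prime is either discrete or a single block.  If it is discrete, every
   element centralising D is diagonal, so K <= D.  Otherwise D acts by
   scalars; if K were not inside D its image would be a nontrivial abelian
   normal subgroup of P, hence regular, and then only the identity of P
   fixes two points.  An element of G would then be determined, up to a
   scalar, by where it sends two indices, so the matrices rG g span at most
   p(p-1) dimensions, whereas by Burnside's theorem (absolute irreducibility
   over C) they span all p^2. *)

Set Implicit Arguments. Unset Strict Implicit. Unset Printing Implicit Defensive.
Import GRing.Theory Num.Theory.
Local Open Scope group_scope.

Section TransitivePerm.
Variable T : finType.

Lemma cent_transitive_fix1 (P : {group {perm T}}) (s : {perm T}) x :
  [transitive P, on [set: T] | 'P] -> {in P, forall q, commute s q} ->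
  s x = x -> s = 1.
Proof.
move=> trP cPs sx; apply/permP => y; rewrite perm1.
have [q Pq ->] := atransP2 trP (in_setT x) (in_setT y).
by rewrite -permM -(cPs q Pq) permM sx.
Qed.

End TransitivePerm.

Section PrimeDegree.
Variables (p : nat) (p_pr : prime p).

Lemma prime_equiv_trivial (P : {group {perm 'I_p}}) (r : rel 'I_p) :
  [transitive P, on [set: 'I_p] | 'P] ->
  reflexive r -> symmetric r -> transitive r ->
  {in P, forall s : {perm 'I_p}, {homo s : x y / r x y}} ->
  (forall i j, r i j -> i = j) \/ (forall i j, r i j).
Proof.
move=> trP rr rs rt rP; pose cl i := [set j | r i j].
have card_cl i j : #|cl i| = #|cl j|.
  suff le_cl k l : #|cl k| <= #|cl l| by apply/eqP; rewrite eqn_leq !le_cl.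
  have [s Ps ->] := atransP2 trP (in_setT k) (in_setT l).
  rewrite -(card_imset _ (@perm_inj _ s)); apply: subset_leq_card.
  by apply/subsetP => y /imsetP[x]; rewrite !inE => rkx ->; apply: rP.
have eq_r : {in [set: 'I_p] & &, equivalence_rel r}.
  move=> x y z _ _ _; split=> // rxy.
  by apply/idP/idP; [apply: rt; rewrite rs | exact: rt].
pose i0 : 'I_p := Ordinal (prime_gt0 p_pr).
have p_eq : p = (#|equivalence_partition r setT| * #|cl i0|)%N.
  rewrite -{1}(card_ord p) -cardsT.
  apply: card_uniform_partition (equivalence_partitionP eq_r).
  by move=> _ /imsetP[x _ ->]; rewrite -(card_cl x i0); apply: eq_card => y; rewrite !inE.
have dvd_p : #|cl i0| %| p by rewrite [X in _ %| X]p_eq dvdn_mull.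
have /primeP[_ /(_ _ dvd_p) /orP[] /eqP cl1] := p_pr; [left | right] => i j.
  move=> rij; have /cards1P[k clk] : #|cl i| == 1%N by rewrite (card_cl i i0) cl1.
  have : (i \in cl i) && (j \in cl i) by rewrite !inE rr rij.
  by rewrite clk !inE => /andP[/eqP-> /eqP->].
have : cl i = setT.
  by apply/eqP; rewrite eqEcard subsetT cardsT /= card_ord (card_cl i i0) cl1.
by move/setP/(_ j); rewrite !inE.
Qed.

Lemma prime_norm_transitive (P Q : {group {perm 'I_p}}) :
  [transitive P, on [set: 'I_p] | 'P] -> P \subset 'N(Q) ->
  Q :=: 1 \/ [transitive Q, on [set: 'I_p] | 'P].
Proof.
move=> trP nQP.
have orbitQ_homo s : s \in P -> {homo s : x y / y \in orbit 'P Q x}.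
  by move=> Ps x y; rewrite -(orbit_conjsg 'P Q s) (normP (subsetP nQP s Ps)).
have [orbit1 | orbitT] := prime_equiv_trivial trP (orbit_refl 'P Q)
  (fun x y => orbit_sym 'P Q y x) (fun y x z rxy ryz => orbit_trans ryz rxy)
  orbitQ_homo.
  left; apply/trivgP/subsetP => q Qq; rewrite inE; apply/eqP/permP => i.
  by rewrite perm1; apply/esym/orbit1/orbitP; exists q.
right; apply/imsetP; exists (Ordinal (prime_gt0 p_pr)) => //.
by apply/setP => j; rewrite in_setT orbitT.
Qed.

Lemma prime_abelian_normal_stab2 (P Q : {group {perm 'I_p}}) s i j :
  [transitive P, on [set: 'I_p] | 'P] -> Q <| P -> abelian Q -> Q :!=: 1 ->
  s \in P -> i != j -> s i = i -> s j = j -> s = 1.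
Proof.
move=> trP /andP[_ nQP] abQ ntQ Ps neij si sj.
have trQ : [transitive Q, on [set: 'I_p] | 'P].
  by have [Q1 | //] := prime_norm_transitive trP nQP; rewrite Q1 eqxx in ntQ.
have regQ q k : q \in Q -> q k = k -> q = 1.
  move=> Qq; apply: cent_transitive_fix1 trQ _ => q' Qq'.
  exact: (centsP abQ).
have [q Qq] := atransP2 trQ (in_setT i) (in_setT j); rewrite /= apermE => qij.
have qs : q ^ s = q.
  have Qqs : q ^ s \in Q by rewrite memJ_norm ?(subsetP nQP).
  suff /eqP : q ^ s * q^-1 = 1 by rewrite -eq_mulgV1 => /eqP.
  apply: (regQ _ i); first by rewrite groupM ?groupV.
  by rewrite permM conjgE !permM -{1}si permK -qij sj qij permK.
have trq : [transitive <[q]>, on [set: 'I_p] | 'P].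
  have nqQ : Q \subset 'N(<[q]>) by rewrite cents_norm ?sub_abelian_cent ?cycle_subG.
  have [/eqP | //] := prime_norm_transitive trQ nqQ.
  by rewrite cycle_eq1 => /eqP q1; rewrite q1 perm1 in qij; rewrite qij eqxx in neij.
apply: (cent_transitive_fix1 trq) si => _ /cycleP[m ->].
by apply: commuteX; apply/esym/commgP/conjg_fixP.
Qed.

End PrimeDegree.

Local Open Scope ring_scope.

Section MonomialMatrix.
Variables (F : fieldType) (n : nat).
Implicit Types (A B : 'M[F]_n) (s : {perm 'I_n}).

Definition mono_perm A : {perm 'I_n} :=
  odflt 1%g [pick s : {perm 'I_n} | [forall i, forall j, (A i j != 0) == (j == s i)]].

Lemma monomial_mxP A :
  reflect (exists s, forall i j, (A i j != 0) = (j == s i)) (is_monomial_mx A).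
Proof.
apply: (iffP andP) => [[/forallP rows /forallP cols] | [s sA]].
  have /fin_all_exists[f Af] : forall i, exists j, forall k, (A i k != 0) = (k == j).
    by move=> i; have /card1P[j Aj] := rows i; exists j => k; have := Aj k; rewrite !inE.
  have f_inj : injective f.
    move=> i i' eq_f; have /card1P[k Ak] := cols (f i).
    have := Ak i; have := Ak i'; rewrite !inE !Af -eq_f eqxx.
    by move=> /esym/eqP-> /esym/eqP->.
  by exists (perm f_inj) => i j; rewrite permE.
split; apply/forallP => k; apply/card1P.
  by exists (s k) => j; rewrite !inE sA.
exists (s^-1 k)%g => i; rewrite !inE sA.
by rewrite -(inj_eq (@perm_inj _ s^-1)) permK eq_sym.
Qed.

Lemma mono_permE A : is_monomial_mx A ->
  forall i j, (A i j != 0) = (j == mono_perm A i).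
Proof.
case/monomial_mxP=> s sA; rewrite /mono_perm; case: pickP => [t /forallP tA | ].
  by move=> i j; have /forallP/(_ j)/eqP := tA i.
by move/(_ s)/negbT/negP; case; apply/forallP => i; apply/forallP => j; rewrite sA.
Qed.

Lemma monomial_mx_eq0 A i j : is_monomial_mx A -> j != mono_perm A i -> A i j = 0.
Proof. by move=> mA /negbTE nj; apply/eqP; rewrite -[_ == 0]negbK mono_permE ?nj. Qed.

Lemma mono_perm_eq A s : (forall i j, (A i j != 0) = (j == s i)) -> mono_perm A = s.
Proof.
move=> sA; have mA : is_monomial_mx A by apply/monomial_mxP; exists s.
by apply/permP => i; apply/esym/eqP; rewrite -(mono_permE mA) sA.
Qed.

Lemma mulmx_monomialE A B i j : is_monomial_mx A ->
  (A *m B) i j = A i (mono_perm A i) * B (mono_perm A i) j.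
Proof.
move=> mA; rewrite mxE (bigD1 (mono_perm A i)) //= big1 ?addr0 // => k nk.
by rewrite monomial_mx_eq0 ?mul0r.
Qed.

Lemma mono_permM A B : is_monomial_mx A -> is_monomial_mx B ->
  mono_perm (A *m B) = (mono_perm A * mono_perm B)%g.
Proof.
move=> mA mB; apply: mono_perm_eq => i j.
by rewrite mulmx_monomialE // mulf_eq0 negb_or !mono_permE // eqxx permM.
Qed.

Lemma is_diag_monomial_mx A :
  is_monomial_mx A -> is_diag_mx A = (mono_perm A == 1%g).
Proof.
move=> mA; apply/is_diag_mxP/eqP => [A_diag | A1 i j ne_ij].
  apply/permP => i; rewrite perm1; apply/eqP/negPn/negP => ne.
  by have := mono_permE mA i (mono_perm A i); rewrite eqxx A_diag ?eqxx // eq_sym.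
by rewrite monomial_mx_eq0 // A1 perm1 eq_sym.
Qed.

End MonomialMatrix.

Section EnvelopeRank.
Variables (F : fieldType) (gT : finGroupType) (G : {group gT}) (n : nat).
Variable rG : mx_representation F G n.

Lemma mxrank_envelope_le (X : finType) (c : gT -> X) :
  {in G &, forall x y, c x = c y -> is_scalar_mx (rG (x * y^-1)%g)} ->
  (\rank (enveloping_algebra_mx rG) <= #|c @: G|)%N.
Proof.
move=> c_scalar; pose rep v := odflt 1%g [pick g in G | c g == v].
have repP x : x \in G -> rep (c x) \in G /\ c (rep (c x)) = c x.
  by rewrite /rep => Gx; case: pickP => [y /andP[Gy /eqP] | /(_ x)]; rewrite ?Gx ?eqxx.
have sub_sum : (enveloping_algebra_mx rG <= \sum_(v in c @: G) <<mxvec (rG (rep v))>>)%MS.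
  apply/row_subP => k; rewrite rowK; have Gx := enum_valP k; set x := enum_val k in Gx *.
  have [Gy cy] := repP x Gx; set y := rep (c x) in Gy cy *.
  rewrite (sumsmx_sup (c x)) ?imset_f // genmxE.
  have /is_scalar_mxP[a rxy] := c_scalar _ _ Gx Gy (esym cy).
  have -> : rG x = rG (x * y^-1)%g *m rG y by rewrite -repr_mxM ?groupM ?groupV ?mulgVK.
  by rewrite rxy mul_scalar_mx linearZ scalemx_sub.
apply: leq_trans (mxrankS sub_sum) _; apply: leq_trans (mxrank_sum_leqif _) _.
rewrite -sum1_card; apply: leq_sum => v _.
by rewrite /= genmxE rank_leq_row.
Qed.

End EnvelopeRank.

Section MonomialRepresentation.
Variables (F : fieldType) (gT : finGroupType) (G : {group gT}) (n : nat).
Variable rG : mx_representation F G n.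
Hypothesis rG_mono : forall g, g \in G -> is_monomial_mx (rG g).

Local Notation D := (diag_part rG).

Definition rperm g := mono_perm (rG g).

Lemma rpermM : {in G &, {morph rperm : x y / (x * y)%g}}.
Proof. by move=> x y Gx Gy; rewrite /rperm repr_mxM // mono_permM ?rG_mono. Qed.

Canonical rperm_morphism := Morphism rpermM.

Lemma rperm_eq0 g i j : g \in G -> j != rperm g i -> rG g i j = 0.
Proof. by move/rG_mono; apply: monomial_mx_eq0. Qed.

Lemma diag_part_ker : D = 'ker rperm_morphism.
Proof.
apply/setP => g; rewrite !inE; case Gg: (g \in G) => //=.
by rewrite is_diag_monomial_mx ?rG_mono.
Qed.

Lemma diag_part_normal : D <| G.
Proof. by rewrite diag_part_ker ker_normal. Qed.

Lemma diag_part_abelian : mx_faithful rG -> abelian D.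
Proof.
move=> ffulG; apply/centsP => x /setIdP[Gx /diag_mxP[a rGx]] y /setIdP[Gy /diag_mxP[b rGy]].
by apply: (mx_faithful_inj ffulG); rewrite ?groupM // !repr_mxM // rGx rGy diag_mxC.
Qed.

Lemma rperm_transitive :
  mx_irreducible rG -> [transitive rperm_morphism @* G, on [set: 'I_n] | 'P].
Proof.
case/mx_irrP => n_gt0 irr_full; pose i0 : 'I_n := Ordinal n_gt0.
pose O := orbit 'P (rperm_morphism @* G) i0.
pose U : 'M[F]_n := diag_mx (\row_k (k \in O)%:R).
have U_comm g : g \in G -> U *m rG g = rG g *m U.
  move=> Gg; apply/matrixP => a b; rewrite mul_diag_mx mul_mx_diag !mxE.
  have [-> | nb] := eqVneq b (rperm g a); last by rewrite rperm_eq0 // mulr0 mul0r.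
  by rewrite mulrC (orbit_transl _ (mem_orbit 'P a (mem_morphim rperm_morphism Gg Gg))).
have modU : mxmodule rG U by apply/mxmoduleP => g Gg; rewrite U_comm // submxMl.
have U_diag k : U k k = (k \in O)%:R by rewrite !mxE eqxx mulr1n.
have nzU : U != 0.
  by apply/eqP => /matrixP/(_ i0 i0); rewrite U_diag mxE orbit_refl => /eqP; rewrite oner_eq0.
have [B /matrixP UB] := row_fullP (irr_full U modU nzU).
apply/imsetP; exists i0 => //; apply/setP => j; rewrite in_setT; apply/esym/negPn/negP => Oj.
by have := UB j j; rewrite mul_mx_diag !mxE eqxx (negbTE Oj) mulr0 => /eqP; rewrite eq_sym oner_eq0.
Qed.

Lemma diag_part_conj_entry g d i : g \in G -> d \in D ->
  rG (d ^ g)%g (rperm g i) (rperm g i) = rG d i i.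
Proof.
move=> Gg /setIdP[Gd diag_d].
have rperm_d : rperm d = 1%g by apply/eqP; rewrite -is_diag_monomial_mx ?rG_mono.
have GgV : g^-1%g \in G by rewrite groupV.
have rpermVK : rperm g^-1%g (rperm g i) = i.
  by rewrite (morphV rperm_morphism Gg) /= permK.
have rGVK : rG g^-1%g (rperm g i) i * rG g i (rperm g i) = 1.
  have : (rG g^-1%g *m rG g) (rperm g i) (rperm g i) = 1.
    by rewrite -repr_mxM // mulVg repr_mx1 mxE eqxx.
  by rewrite mulmx_monomialE ?rG_mono // -/(rperm _) rpermVK.
rewrite conjgE !repr_mxM ?groupM // !mulmx_monomialE ?rG_mono // -!/(rperm _).
by rewrite rpermVK rperm_d perm1 mulrCA rGVK mulr1.
Qed.

Definition same_diag_char i j := [forall d in D, rG d i i == rG d j j].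

Lemma same_diag_char_rperm g i j : g \in G ->
  same_diag_char i j -> same_diag_char (rperm g i) (rperm g j).
Proof.
move=> Gg /forall_inP eq_ij; apply/forall_inP => d Dd.
have DdV : (d ^ g^-1 \in D)%g.
  by rewrite memJ_norm // (subsetP (normal_norm diag_part_normal)) ?groupV.
by rewrite -(conjgKV g d) !diag_part_conj_entry // eq_ij.
Qed.

Lemma same_diag_char_cent k i : k \in 'C_G(D)%g -> same_diag_char i (rperm k i).
Proof.
case/setIP => Gk /centP cDk; apply/forall_inP => d Dd; have [Gd diag_d] := setIdP Dd.
have rperm_d : rperm d = 1%g by apply/eqP; rewrite -is_diag_monomial_mx ?rG_mono.
have nz_k : rG k i (rperm k i) != 0 by rewrite mono_permE ?rG_mono.
have := congr1 (fun A : 'M[F]_n => A i (rperm k i)) (congr1 rG (cDk d Dd)).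
rewrite /= !repr_mxM // !mulmx_monomialE ?rG_mono // -!/(rperm _) rperm_d perm1.
by rewrite [RHS]mulrC => /(mulfI nz_k) ->.
Qed.

Lemma diag_part_self_cent :
  (forall i j, same_diag_char i j -> i = j) -> ('C_G(D) \subset D)%g.
Proof.
move=> sep; apply/subsetP => k cDk; have [Gk _] := setIP cDk.
rewrite inE Gk is_diag_monomial_mx ?rG_mono //; apply/eqP/permP => i.
by rewrite perm1; apply/esym/sep/same_diag_char_cent.
Qed.

Lemma diag_part_scalar :
  (forall i j, same_diag_char i j) -> {in D, forall d, is_scalar_mx (rG d)}.
Proof.
move=> same_all d Dd; have [_ /is_diag_mxP diag_d] := setIdP Dd.
rewrite /is_scalar_mx; case: insubP => // i0 _ _; apply/eqP/matrixP => i j.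
rewrite mxE; have [<- | ne_ij] := eqVneq i j; last by rewrite mulr0n diag_d.
by rewrite mulr1n; move/forall_inP: (same_all i i0) => /(_ d Dd)/eqP.
Qed.

Lemma envelope_rank_lt_stab2 i j : i != j ->
  {in D, forall d, is_scalar_mx (rG d)} ->
  (forall g, g \in G -> rperm g i = i -> rperm g j = j -> rperm g = 1%g) ->
  (\rank (enveloping_algebra_mx rG) < n * n)%N.
Proof.
move=> ne_ij D_scalar stab2; pose c g := (rperm g i, rperm g j).
have c_scalar : {in G &, forall x y, c x = c y -> is_scalar_mx (rG (x * y^-1)%g)}.
  move=> x y Gx Gy [ci cj]; have GyV : y^-1%g \in G by rewrite groupV.
  apply: D_scalar; rewrite diag_part_ker; apply/kerP; rewrite ?groupM //.
  apply: stab2; rewrite ?groupM // rpermM // (morphV rperm_morphism Gy) /= permM.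
    by rewrite ci permK.
  by rewrite cj permK.
have sub_offdiag : c @: G \subset [set v | v.1 != v.2].
  by apply/subsetP => _ /imsetP[g Gg ->]; rewrite inE /= (inj_eq perm_inj).
apply: leq_ltn_trans (mxrank_envelope_le c_scalar) _.
apply: leq_ltn_trans (subset_leq_card sub_offdiag) _.
have -> : (n * n = #|[set: 'I_n * 'I_n]|)%N by rewrite cardsT card_prod card_ord.
by apply: proper_card; rewrite properT; apply/eqP => /setP/(_ (i, i)); rewrite !inE eqxx.
Qed.

Lemma same_diag_char_dichotomy : prime n -> mx_irreducible rG ->
  (forall i j, same_diag_char i j -> i = j) \/ (forall i j, same_diag_char i j).
Proof.
move=> n_pr irr; apply: (prime_equiv_trivial n_pr (rperm_transitive irr)).
- by move=> i; apply/forall_inP.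
- by move=> i j; apply/forall_inP/forall_inP => eq_ij d Dd; rewrite eq_sym eq_ij.
- move=> j i k /forall_inP eq_ij /forall_inP eq_jk; apply/forall_inP => d Dd.
  by rewrite (eqP (eq_ij d Dd)) eq_jk.
- by move=> _ /morphimP[g Gg _ ->] x y; apply: same_diag_char_rperm.
Qed.

Lemma diag_part_max (K : {group gT}) : prime n -> mx_absolutely_irreducible rG ->
  (K <| G)%g -> abelian K -> (D \subset K)%g -> (K \subset D)%g.
Proof.
move=> n_pr absirr nsKG abK sDK; have irr := mx_abs_irrW absirr.
have [sep | same_all] := same_diag_char_dichotomy n_pr irr.
  apply: subset_trans (diag_part_self_cent sep); rewrite subsetI (normal_sub nsKG).
  exact: subset_trans abK (centS sDK).
rewrite diag_part_ker ker_trivg_morphim (normal_sub nsKG) subG1 /=; apply: contraT => ntK.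
pose i0 : 'I_n := Ordinal (prime_gt0 n_pr); pose i1 : 'I_n := Ordinal (prime_gt1 n_pr).
have := @envelope_rank_lt_stab2 i0 i1 isT (diag_part_scalar same_all).
case/andP: absirr => _ /eqP ->; rewrite ltnn; apply => g Gg.
by apply: (prime_abelian_normal_stab2 n_pr (rperm_transitive irr) (morphim_normal _ nsKG)
  (morphim_abelian _ abK) ntK (mem_morphim _ Gg Gg)).
Qed.

End MonomialRepresentation.

Theorem corollary2p13 (R : realType) (p : nat) (gT : finGroupType) (G : {group gT})
    (rG : mx_representation R[i] G p) :
  prime p ->
  mx_faithful rG ->
  (forall g, g \in G -> is_monomial_mx (rG g)) ->
  mx_irreducible rG ->
  [/\ diag_part rG <| G, abelian (diag_part rG)
    & forall K : {group gT}, K <| G -> abelian K ->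
        diag_part rG \subset K -> K = diag_part rG :> {set gT}].
Proof.
move=> p_pr ffulG mono irr; have absirr := group_closure_closed_field irr.
split; [exact: diag_part_normal | exact: diag_part_abelian |].
move=> K nsKG abK sDK; apply/eqP; rewrite eqEsubset sDK andbT.
exact: diag_part_max.
Qed.
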